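(* Assume that the solvency sets $(\mathbf{K}_t)_{t=0,\dots,T}$ are cones. (i) (NA2) holds if and only if $\Xi_t^0=L^0(\mathbf{K}_t,\mathcal{F}_t)$ for all $t\le T$. (ii) (NA2) holds if and only if $\mathrm{m}(\mathbf{K}_t|\mathcal{F}_{t-1})\subseteq\mathbf{K}_{t-1}$ a.s. for $t=1,\dots,T$. (iii) If the solvency sets are strictly proper, then (NA2) implies (SNR), i.e. $\hat\Xi_t^0\cap L^0(-\mathbf{K}_t,\mathcal{F}_t)\subseteq L^0(\mathbf{K}_t^0,\mathcal{F}_t)$ for all $t$.
   Context: $(\Omega,\mathcal{F},(\mathcal{F}_t)_{t=0,\dots,T},\mathbb{P})$ filtered complete probability space, $\mathcal{F}_0$ trivial. $L^0(\Gamma,\mathcal{F}_t)$: $\mathcal{F}_t$-measurable random vectors a.s. in $\Gamma$. Solvency sets: $\mathbf{K}_t$ is an $\mathcal{F}_t$-measurable random closed convex set in $\mathbb{R}^d$ with $\mathbf{K}_t+\mathbb{R}^d_+\subseteq\mathbf{K}_t$ and $\mathbf{K}_t\cap\mathbb{R}^d_-=\{0\}$ a.s.; $\mathbf{K}_t^0=\bigcap_{c\in\mathbb{Q}\setminus\{0\}}c\mathbf{K}_t$; strictly proper: $\mathbf{K}_t\cap(-\mathbf{K}_t)=\{0\}$ a.s. $\mathsf{A}_{t,s}=\sum_{u=t}^sL^0(-\mathbf{K}_u,\mathcal{F}_u)$. $\Xi_T^0=L^0(\mathbf{K}_T,\mathcal{F}_T)$, $\Xi_t^0=L^0(\mathbf{K}_t,\mathcal{F}_t)+(\Xi_{t+1}^0\cap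 L^0(\mathbb{R}^d,\mathcal{F}_t))$ for $t<T$ (equivalently $\Xi_t^0=(-\mathsf{A}_{t,T})\cap L^0(\mathbb{R}^d,\mathcal{F}_t)$); $\hat\Xi_T^0=\Xi_T^0$, $\hat\Xi_t^0=L^0(\mathbf{K}_t,\mathcal{F}_t)+\mathrm{cl}_0(\Xi_{t+1}^0\cap L^0(\mathbb{R}^d,\mathcal{F}_t))$ for $t<T$ ($\mathrm{cl}_0$: closure in probability). (NA2) (no arbitrage of the second kind): for every $t=0,\dots,T$ and $\eta_t\in L^0(\mathbb{R}^d,\mathcal{F}_t)$, if $(\eta_t+\mathsf{A}_{t,T})\cap L^0(\mathbf{K}_T,\mathcal{F}_T)\neq\emptyset$ then $\eta_t\in L^0(\mathbf{K}_t,\mathcal{F}_t)$. $\mathrm{m}(\mathbf{X}|\mathcal{F}_{t-1})$ is the largest $\mathcal{F}_{t-1}$-measurable random set a.s. contained in $\mathbf{X}$. *)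

From HB Require Import structures.
From mathcomp Require Import all_boot all_order all_algebra.
From mathcomp Require Import all_classical all_reals all_analysis.
Set Implicit Arguments. Unset Strict Implicit. Unset Printing Implicit Defensive.
Import Order.TTheory GRing.Theory Num.Theory.
Import numFieldNormedType.Exports.
Local Open Scope classical_set_scope.
Local Open Scope ring_scope.

Section Defs.
Context (dm : measure_display) (Omega : measurableType dm) (R : realType)
        (d : nat).
Notation vec := 'rV[R]_d.

Definition is_filtration (P : probability Omega R) (F : nat -> set (set Omega)) :=
  [/\ (forall t, sigma_algebra setT (F t)),
      (forall t A, F t A -> measurable A),
      (forall s t A, (s <= t)%N -> F s A -> F t A),
      (forall N A, measurable N -> P N = 0%E -> A `<=` N -> F 0%N A) &
      (forall A, F 0%N A -> P A = 0%E \/ P A = 1%E)].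

Definition rv_meas (G : set (set Omega)) (X : Omega -> vec) :=
  forall (i : 'I_d) (B : set R), measurable B -> G ((fun w => X w ord0 i) @^-1` B).

Definition rset_meas (G : set (set Omega)) (K : Omega -> set vec) :=
  forall U : set vec, open U -> G [set w | K w `&` U !=set0].

Definition convex_set (A : set vec) :=
  forall x y (l : R), A x -> A y -> 0 <= l <= 1 -> A (l *: x + (1 - l) *: y).

Definition is_cone (A : set vec) := forall (c : R) x, 0 < c -> A x -> A (c *: x).

Definition Rdplus : set vec := [set x | forall i, 0 <= x ord0 i].
Definition Rdminus : set vec := [set x | forall i, x ord0 i <= 0].

Definition solvency (P : probability Omega R) (G : set (set Omega))
    (K : Omega -> set vec) :=
  [/\ rset_meas G K, (forall w, closed (K w)), (forall w, convex_set (K w)),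
      {ae P, forall w, forall x y, K w x -> Rdplus y -> K w (x + y)} &
      {ae P, forall w, K w `&` Rdminus = [set 0]}].

Definition negset (A : set vec) : set vec := [set x | A (- x)].

Definition K0 (K : Omega -> set vec) : Omega -> set vec :=
  fun w => [set x | forall c : rat, c != 0 -> K w ((ratr c)^-1 *: x)].

Definition L0 (P : probability Omega R) (Gam : Omega -> set vec)
    (G : set (set Omega)) : set (Omega -> vec) :=
  [set X | rv_meas G X /\ {ae P, forall w, Gam w (X w)}].

Definition L0R (P : probability Omega R) (G : set (set Omega)) :=
  L0 P (fun _ => setT) G.

Definition rsum (A B : set (Omega -> vec)) : set (Omega -> vec) :=
  [set X | exists Y Z, A Y /\ B Z /\ X = (fun w => Y w + Z w)].

(* A_{t,t+k} = sum_{u=t}^{t+k} L^0(-K_u, F_u) *)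
Fixpoint Aset_aux (P : probability Omega R) (F : nat -> set (set Omega))
    (K : nat -> Omega -> set vec) (t k : nat) : set (Omega -> vec) :=
  match k with
  | 0 => L0 P (fun w => negset (K t w)) (F t)
  | k.+1 => rsum (Aset_aux P F K t k)
                 (L0 P (fun w => negset (K (t + k.+1)%N w)) (F (t + k.+1)%N))
  end.

Definition Aset P F K (t s : nat) := Aset_aux P F K t (s - t).

(* Xi^0_{T-k} by backward recursion *)
Fixpoint Xi_aux (P : probability Omega R) (F : nat -> set (set Omega))
    (K : nat -> Omega -> set vec) (T k : nat) : set (Omega -> vec) :=
  match k with
  | 0 => L0 P (K T) (F T)
  | k.+1 => rsum (L0 P (K (T - k.+1)%N) (F (T - k.+1)%N))
                 (Xi_aux P F K T k `&` L0R P (F (T - k.+1)%N))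
  end.

Definition Xi0 P F K (T t : nat) := Xi_aux P F K T (T - t).

Definition cvg_in_prob (P : probability Omega R) (X : nat -> Omega -> vec)
    (Y : Omega -> vec) :=
  forall eps : R, 0 < eps ->
    (fun n => P [set w | eps < `|X n w - Y w|]) @ \oo --> 0%E.

Definition cl0 (P : probability Omega R) (G : set (set Omega))
    (A : set (Omega -> vec)) : set (Omega -> vec) :=
  [set Y | L0R P G Y /\
           exists X : nat -> Omega -> vec, (forall n, A (X n)) /\ cvg_in_prob P X Y].

Definition hatXi0 P F K (T t : nat) : set (Omega -> vec) :=
  if (t < T)%N then
    rsum (L0 P (K t) (F t)) (cl0 P (F t) (Xi0 P F K T t.+1 `&` L0R P (F t)))
  else Xi0 P F K T T.

Definition NA2 P F K (T : nat) :=
  forall t, (t <= T)%N -> forall eta, L0R P (F t) eta ->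
    (exists xi, Aset P F K t T xi /\ L0 P (K T) (F T) (fun w => eta w + xi w)) ->
    L0 P (K t) (F t) eta.

Definition is_ccore (P : probability Omega R) (G : set (set Omega))
    (X M : Omega -> set vec) :=
  [/\ rset_meas G M, (forall w, closed (M w)),
      {ae P, forall w, M w `<=` X w} &
      forall M' : Omega -> set vec, rset_meas G M' -> (forall w, closed (M' w)) ->
        {ae P, forall w, M' w `<=` X w} -> {ae P, forall w, M' w `<=` M w}].

End Defs.

(* Under the cone assumption each K_t is closed under addition, so (NA2)
   reduces to its one-period form L^0(K_t, F_{t-1}) <= L^0(K_{t-1}, F_{t-1}):
   a position that becomes solvent at T after trades in -K_u, u = t..T, is
   unwound one period at a time.  This one-period form says precisely that the
   backward recursion defining Xi_t^0 adds nothing to L^0(K_t, F_t), which is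
   (i).  Testing it against indicators of the events where the conditional
   core m(K_t | F_{t-1}) meets a small rational ball while K_{t-1} misses a
   larger concentric one shows it is equivalent to m(K_t | F_{t-1}) <= K_{t-1},
   which is (ii); the core itself is the closure of a countable union of
   candidates that nearly maximise the probability of meeting each rational
   ball.  For (iii), L^0(K_t, F_t) is closed in probability because K_t is
   closed, so the closure in hat Xi_t^0 adds nothing either, and a strictly
   proper K_t meets -K_t only at 0. *)

From Pilot Require Import Defs.
From HB Require Import structures.
From mathcomp Require Import all_boot all_order all_algebra.
From mathcomp Require Import all_classical all_reals all_analysis.
From mathcomp Require Import measurable_realfun ring lra zify.
Import Order.TTheory GRing.Theory Num.Theory.
Import numFieldNormedType.Exports.
Set Implicit Arguments. Unset Strict Implicit.
Local Open Scope classical_set_scope.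
Local Open Scope ring_scope.

Section RandomVectors.
Context (dm : measure_display) (Omega : measurableType dm) (R : realType) (d : nat).
Local Notation vec := 'rV[R]_d.
Implicit Types (X Y : Omega -> vec) (A B U : set vec).

Lemma cone_convex_addr A x y : is_cone A -> Defs.convex_set A ->
  A x -> A y -> A (x + y).
Proof.
move=> coneA convA Ax Ay.
have -> : x + y = 2 *: (2^-1 *: x + (1 - 2^-1) *: y).
  have h1 : (2 : R) * 2^-1 = 1 by field.
  have h2 : (2 : R) * (1 - 2^-1) = 1 by field.
  by rewrite scalerDr !scalerA h1 h2 !scale1r.
by apply: coneA => //; apply: convA => //; apply/andP; split; lra.
Qed.

Lemma rv_norm_ge_coord (v : vec) i : `|v ord0 i| <= `|v|.
Proof.
rewrite [leRHS]/Num.Def.normr /= mx_normrE.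
by apply/bigmax_geP; right => /=; exists (ord0, i).
Qed.

Lemma rv_norm_le (v : vec) c : 0 <= c -> (forall i, `|v ord0 i| <= c) -> `|v| <= c.
Proof.
move=> c0 h; rewrite [leLHS]/Num.Def.normr /= mx_normrE.
by apply: bigmax_le => // -[a i] _ /=; rewrite (ord1 a); exact: h.
Qed.

Lemma rv_norm_lt (v : vec) c : 0 < c -> (forall i, `|v ord0 i| < c) -> `|v| < c.
Proof.
move=> c0 h; rewrite [ltLHS]/Num.Def.normr /= mx_normrE.
by apply: bigmax_lt => // -[a i] _ /=; rewrite (ord1 a); exact: h.
Qed.

Definition rat_vec (n : nat) : vec :=
  if @unpickle 'rV[rat]_d n is Some v then map_mx ratr v else 0.

Definition radius (m : nat) : R := m.+1%:R^-1.

Lemma radius_gt0 m : 0 < radius m.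
Proof. by rewrite invr_gt0 ltr0n. Qed.

Lemma exists_radius_lt e : 0 < e -> exists m, radius m < e.
Proof.
move=> e0; exists (Num.trunc e^-1); rewrite /radius invf_plt ?posrE ?ltr0n //.
exact: truncnS_gt.
Qed.

Lemma rat_vec_dense (x : vec) e : 0 < e -> exists n, `|x - rat_vec n| < e.
Proof.
move=> e0.
have : forall i : 'I_d, exists a : rat, `|x ord0 i - ratr a| < e.
  move=> i; have [a] := @rat_in_itvoo R (x ord0 i - e) (x ord0 i) ltac:(lra).
  by rewrite in_itv /= => /andP[h1 h2]; exists a; rewrite ltr_norml; apply/andP; split; lra.
move=> /fin_all_exists [a ha]; exists (pickle (\row_i a i)).
by rewrite /rat_vec pickleK; apply: rv_norm_lt => // i; rewrite !mxE; exact: ha.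
Qed.

(* The factor 3 leaves room for the separation arguments below: a point
   within [radius m] of the centre is [2 * radius m] away from the outside. *)
Lemma open_rat_ball U x : open U -> U x ->
  exists n m, `|x - rat_vec n| < radius m /\ ball (rat_vec n) (3 * radius m) `<=` U.
Proof.
move=> oU Ux; have : nbhs x U by apply: open_nbhs_nbhs; split.
rewrite nbhs_ballP => -[e e0 be].
have [m hm] := @exists_radius_lt (e / 4) ltac:(by rewrite divr_gt0).
have [n hn] := rat_vec_dense x (radius_gt0 m); exists n, m; split => // y.
rewrite -!ball_normE /= => hy; apply: be; rewrite -ball_normE /=.
by have := ler_distD (rat_vec n) x y; have := radius_gt0 m; lra.
Qed.

Definition meets_rat_ball A n m := A `&` ball (rat_vec n) (radius m) !=set0.
Definition meets_rat_ball3 A n m := A `&` ball (rat_vec n) (3 * radius m) !=set0.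

Lemma meets_rat_ball3W A n m : meets_rat_ball A n m -> meets_rat_ball3 A n m.
Proof.
case=> x [Ax Bx]; exists x; split => //; move: Bx; rewrite -!ball_normE /=.
by have := radius_gt0 m; lra.
Qed.

Lemma closed_sub_of_rat_balls A B : closed B ->
  (forall n m, meets_rat_ball A n m -> meets_rat_ball3 B n m) -> A `<=` B.
Proof.
move=> cB hAB x Ax; apply: contrapT => nBx.
have [n [m [xn nB]]] := open_rat_ball (closed_openC cB) nBx.
have [y [By yn]] := hAB n m ltac:(by exists x; split; rewrite // -ball_normE /= distrC).
exact: nB y yn By.
Qed.

Lemma closure_meets_open A U : open U ->
  (closure A `&` U !=set0 <-> A `&` U !=set0).
Proof.
move=> oU; split; last by case=> x [Ax Ux]; exists x; split => //; exact: subset_closure.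
by case=> x [cx Ux]; apply: cx; apply: open_nbhs_nbhs.
Qed.

Definition rat_ball_escape (M Kc : Omega -> set vec) n m :=
  [set w | meets_rat_ball (M w) n m /\ ~ meets_rat_ball3 (Kc w) n m].

Lemma ball_far (q y z : vec) r : ball q r y -> ~ ball q (3 * r) z -> r < `|z - y|.
Proof.
rewrite -!ball_normE /= => hy /negP; rewrite -leNgt => hz.
by rewrite distrC; have := ler_distD y q z; have := normr_ge0 (q - y); lra.
Qed.

Lemma ball_corner (q : vec) r : 0 < r -> ball q (3 * r) (q + const_mx r).
Proof.
move=> r0; rewrite -ball_normE /= opprD addrA subrr add0r normrN.
apply: (@le_lt_trans _ _ r); last lra.
by apply: rv_norm_le => [|i]; rewrite ?mxE ?ger0_norm //; exact: ltW.
Qed.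

Lemma ball_corner_ge (q y : vec) r : ball q r y -> Rdplus (q + const_mx r - y).
Proof.
rewrite -ball_normE /= => hy i; rewrite !mxE.
have := le_lt_trans (rv_norm_ge_coord (q - y) i) hy.
by rewrite !mxE ltr_norml => /andP[h1 h2]; lra.
Qed.

Section SigmaAlgebra.
Variables (G : set (set Omega)) (sigmaG : sigma_algebra setT G).

Let GE : G = (G.-sigma.-measurable : set (set (g_sigma_algebraType G))).
Proof. by rewrite measurable_g_measurableTypeE. Qed.

Lemma sa_set0 : G set0. Proof. by rewrite GE; exact: measurable0. Qed.
Lemma sa_setC S : G S -> G (~` S). Proof. by rewrite GE; exact: measurableC. Qed.
Lemma sa_setI S S' : G S -> G S' -> G (S `&` S').
Proof. by rewrite GE; exact: measurableI. Qed.
Lemma sa_setU S S' : G S -> G S' -> G (S `|` S').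
Proof. by rewrite GE; exact: measurableU. Qed.
Lemma sa_bigcup (S : nat -> set Omega) : (forall n, G (S n)) -> G (\bigcup_n S n).
Proof. by rewrite GE => h; exact: bigcupT_measurable. Qed.
Lemma sa_fin_bigcap (S : 'I_d -> set Omega) : (forall i, G (S i)) ->
  G (\bigcap_(i in [set: 'I_d]) S i).
Proof. by rewrite GE => h; apply: fin_bigcap_measurable => //; exact: finite_finset. Qed.

Lemma rv_measP X : rv_meas G X <->
  forall i, measurable_fun [set: g_sigma_algebraType G] (fun w => X w ord0 i).
Proof.
split=> [h i _ S mS|h i S mS]; first by rewrite setTI -GE; exact: h.
by have := h i measurableT S mS; rewrite setTI -GE.
Qed.

Lemma rv_meas_cst (c : vec) : rv_meas G (fun _ => c).
Proof. by apply/rv_measP => i; exact: measurable_cst. Qed.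

Lemma rv_meas_add X Y : rv_meas G X -> rv_meas G Y -> rv_meas G (fun w => X w + Y w).
Proof.
move=> /rv_measP hX /rv_measP hY; apply/rv_measP => i.
rewrite (_ : (fun w => _) = fun w => X w ord0 i + Y w ord0 i).
  exact: measurable_funD.
by apply/funext => w; rewrite mxE.
Qed.

Lemma rv_meas_opp X : rv_meas G X -> rv_meas G (fun w => - X w).
Proof.
move=> /rv_measP hX; apply/rv_measP => i.
rewrite (_ : (fun w => _) = fun w => - X w ord0 i); first exact: measurable_funN.
by apply/funext => w; rewrite mxE.
Qed.

Lemma rv_meas_if (S : set Omega) X Y : G S -> rv_meas G X -> rv_meas G Y ->
  rv_meas G (fun w => if `[< S w >] then X w else Y w).
Proof.
move=> hS hX hY i B mB.
rewrite (_ : _ @^-1` B = (S `&` ((fun w => X w ord0 i) @^-1` B)) `|`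
   (~` S `&` ((fun w => Y w ord0 i) @^-1` B))).
  by apply: sa_setU; apply: sa_setI => //; [exact: hX|exact: sa_setC|exact: hY].
apply/seteqP; split => w /=; first by case: asboolP => Sw h; [left|right].
by case=> -[Sw h]; case: asboolP.
Qed.

Let sa_norm_coord X i (I : set R) : rv_meas G X -> measurable I ->
  G ((fun w => `|X w ord0 i|) @^-1` I).
Proof.
move=> /rv_measP hX mI.
by have := measurableT_comp (@normr_measurable R _) (hX i) measurableT mI; rewrite setTI -GE.
Qed.

Lemma sa_norm_le X c : rv_meas G X -> 0 <= c -> G [set w | `|X w| <= c].
Proof.
move=> hX c0.
rewrite (_ : [set w | _] = \bigcap_(i in [set: 'I_d])
   ((fun w => `|X w ord0 i|) @^-1` `]-oo, c]%classic)).
  by apply: sa_fin_bigcap => i; apply: sa_norm_coord => //; exact: measurable_itv.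
apply/seteqP; split => w /=.
  by move=> h i _ /=; rewrite in_itv /=; exact: le_trans (rv_norm_ge_coord _ _) h.
by move=> h; apply: rv_norm_le => // i; have := h i I; rewrite /= in_itv.
Qed.

Lemma sa_norm_lt X c : rv_meas G X -> G [set w | `|X w| < c].
Proof.
move=> hX; have [c0|c0] := ltP 0 c; last first.
  rewrite (_ : [set w | _] = set0); first exact: sa_set0.
  by apply/seteqP; split => w //= h; have := le_lt_trans (normr_ge0 _) h; rewrite ltNge c0.
rewrite (_ : [set w | _] = \bigcap_(i in [set: 'I_d])
   ((fun w => `|X w ord0 i|) @^-1` `]-oo, c[%classic)).
  by apply: sa_fin_bigcap => i; apply: sa_norm_coord => //; exact: measurable_itv.
apply/seteqP; split => w /=.
  by move=> h i _ /=; rewrite in_itv /=; exact: le_lt_trans (rv_norm_ge_coord _ _) h.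
by move=> h; apply: rv_norm_lt => // i; have := h i I; rewrite /= in_itv.
Qed.

Lemma sa_preimage_open X U : rv_meas G X -> open U -> G (X @^-1` U).
Proof.
move=> hX oU.
rewrite (_ : X @^-1` U = \bigcup_n \bigcup_m
  (if `[< ball (rat_vec n) (radius m) `<=` U >]
   then [set w | `|X w - rat_vec n| < radius m] else set0)).
  apply: sa_bigcup => n; apply: sa_bigcup => m; case: asboolP => _; last exact: sa_set0.
  by apply: sa_norm_lt; apply: rv_meas_add hX (rv_meas_cst _).
apply/seteqP; split => w /=.
  move=> Uw; have [n [m [h1 h2]]] := open_rat_ball oU Uw.
  exists n => //; exists m => //; case: asboolP => // nsub; exfalso; apply: nsub.
  move=> y hy; apply: h2; move: hy; rewrite -!ball_normE /=; have := radius_gt0 m; lra.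
case=> n _ [m _]; case: asboolP => // sub h; apply: sub.
by rewrite -ball_normE /= distrC.
Qed.

Lemma rset_meas_set1 X : rv_meas G X -> rset_meas G (fun w => [set X w]).
Proof.
move=> hX U oU; rewrite (_ : [set w | _] = X @^-1` U); first exact: sa_preimage_open.
by apply/seteqP; split => w /=; [case=> y [-> ]|move=> Uw; exists (X w)].
Qed.

Lemma sa_meets_rat_ball (M : Omega -> set vec) n m : rset_meas G M ->
  G [set w | meets_rat_ball (M w) n m].
Proof. by move=> hM; apply: hM; exact: ball_open. Qed.

Lemma sa_meets_rat_ball3 (M : Omega -> set vec) n m : rset_meas G M ->
  G [set w | meets_rat_ball3 (M w) n m].
Proof. by move=> hM; apply: hM; exact: ball_open. Qed.

Lemma sa_rat_ball_escape (M Kc : Omega -> set vec) n m :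
  rset_meas G M -> rset_meas G Kc -> G (rat_ball_escape M Kc n m).
Proof.
move=> hM hK; apply: sa_setI; first exact: sa_meets_rat_ball.
by apply: sa_setC; exact: sa_meets_rat_ball3.
Qed.

End SigmaAlgebra.

Lemma rv_measS (G G' : set (set Omega)) X : G `<=` G' -> rv_meas G X -> rv_meas G' X.
Proof. by move=> GG' hX i B mB; apply: GG'; exact: hX. Qed.

Section AlmostSurely.
Variable P : probability Omega R.

Lemma measure_setD_eq0 (S S' : set Omega) : measurable S -> measurable S' ->
  S' `<=` S -> (P S <= P S')%E -> P (S `\` S') = 0%E.
Proof.
move=> mS mS' S'S le; apply/eqP; rewrite eq_le measure_ge0 andbT.
rewrite measureD //; last exact: le_lt_trans (probability_le1 P mS) (ltry 1).
by rewrite (setIidPr S S').2 // sube_le0.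
Qed.

Lemma le_measure_ae (S S' : set Omega) : measurable S -> measurable S' ->
  {ae P, forall w, S w -> S' w} -> (P S <= P S')%E.
Proof.
move=> mS mS' [N [mN N0 SN]].
apply: (@le_trans _ _ (P (S' `|` N))).
  apply: le_measure; rewrite ?inE; [exact: mS|exact: measurableU|].
  move=> w Sw; have [Nw|Nw] := pselect (N w); [by right|left].
  by apply: contrapT => nS'; apply: Nw; apply: SN => /(_ Sw).
apply: le_trans (measureU2 P mS' mN) _.
by have -> : (P : {content set Omega -> \bar R}) N = 0%E := N0; rewrite adde0.
Qed.

Lemma measure_le_cvg0 (S : set Omega) (u : nat -> \bar R) :
  (forall k, (P S <= u k)%E) -> u @ \oo --> 0%E -> P S = 0%E.
Proof.
move=> Su u0; apply/eqP; rewrite eq_le measure_ge0 andbT.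
have := lime_ge (cvgP _ u0); rewrite (cvg_lim (@ereal_hausdorff R) u0).
by apply; apply: nearW.
Qed.

Lemma ae_sub_of_rat_ball_escape (M Kc : Omega -> set vec) :
  (forall w, closed (Kc w)) ->
  (forall n m, P.-negligible (rat_ball_escape M Kc n m)) ->
  {ae P, forall w, M w `<=` Kc w}.
Proof.
move=> cK hN.
have : {ae P, forall w, forall n m, ~ rat_ball_escape M Kc n m w}.
  apply: ae_foralln => n; apply: ae_foralln => m.
  by apply: negligibleS (hN n m) => w /= /contrapT.
apply: filterS => w hw; apply: closed_sub_of_rat_balls (cK w) _ => n m hM.
by apply: contrapT => nK; apply: (hw n m).
Qed.

End AlmostSurely.

Section ConditionalCore.
Variables (P : probability Omega R) (G : set (set Omega)).
Hypotheses (sigmaG : sigma_algebra setT G) (GP : G `<=` measurable).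
Variables (X : Omega -> set vec) (closedX : forall w, closed (X w)).
Implicit Types M : Omega -> set vec.

Definition core_candidate M :=
  [/\ rset_meas G M, (forall w, closed (M w)) & {ae P, forall w, M w `<=` X w}].

Lemma core_candidate0 : core_candidate (fun _ => set0).
Proof.
split=> [U oU||]; last by apply: aeW => w x.
  rewrite (_ : [set w | _] = set0); first exact: sa_set0.
  by apply/seteqP; split => w // -[x []].
by move=> w; exact: closed0.
Qed.

Lemma core_candidate_closure_bigcup (Ms : nat -> Omega -> set vec) :
  (forall k, core_candidate (Ms k)) ->
  core_candidate (fun w => closure (\bigcup_k Ms k w)).
Proof.
move=> hMs; split.
- move=> U oU; rewrite (_ : [set w | _] = \bigcup_k [set w | Ms k w `&` U !=set0]).
    by apply: sa_bigcup => // k; case: (hMs k) => h _ _; exact: h.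
  apply/seteqP; split => w /=.
    by move/(closure_meets_open _ oU) => -[x [[k _ Mx] Ux]]; exists k => //; exists x.
  by case=> k _ [x [Mx Ux]]; apply/(closure_meets_open _ oU); exists x; split => //; exists k.
- by move=> w; exact: closed_closure.
- have : {ae P, forall w, forall k, Ms k w `<=` X w}.
    by apply: ae_foralln => k; case: (hMs k).
  apply: filterS => w h x cx; rewrite (closure_id (X w)).1 //.
  by apply: closureS cx => y [k _]; exact: h k y.
Qed.

Lemma core_candidate_closureU M M' : core_candidate M -> core_candidate M' ->
  core_candidate (fun w => closure (M w `|` M' w)).
Proof.
move=> hM hM'.
have -> : (fun w => closure (M w `|` M' w)) =
          (fun w => closure (\bigcup_k (if k is 0%N then M else M') w)).
  apply/funext => w; congr closure; apply/seteqP; split.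
    by move=> x [Mx|Mx]; [exists 0%N|exists 1%N].
  by move=> x [[|k] _ Mx]; [left|right].
by apply: core_candidate_closure_bigcup => -[].
Qed.

(* The core maximises, simultaneously for each of the countably many rational
   balls, the probability of meeting that ball; the closure of the union of
   countably many near-maximisers attains every supremum at once. *)
Definition ball_mass M n m := fine (P [set w | meets_rat_ball (M w) n m]).

Definition sup_ball_mass n m := sup [set ball_mass M n m | M in core_candidate].

Let measurable_meets M n m : core_candidate M ->
  measurable [set w | meets_rat_ball (M w) n m].
Proof. by case=> hM _ _; apply: GP; exact: sa_meets_rat_ball. Qed.

Let fin_num_meets M n m : core_candidate M ->
  P [set w | meets_rat_ball (M w) n m] \is a fin_num.
Proof. by move=> hM; apply: fin_num_measure; exact: measurable_meets. Qed.

Lemma has_sup_ball_mass n m : has_sup [set ball_mass M n m | M in core_candidate].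
Proof.
split; first by exists (ball_mass (fun=> set0) n m), (fun=> set0); first exact: core_candidate0.
exists 1 => _ [M hM <-]; rewrite /ball_mass -lee_fin fineK; last exact: fin_num_meets.
exact/probability_le1/measurable_meets.
Qed.

Lemma ball_mass_le M M' n m : core_candidate M -> core_candidate M' ->
  (forall w, M w `<=` M' w) -> ball_mass M n m <= ball_mass M' n m.
Proof.
move=> hM hM' MM'; apply: fine_le; [exact: fin_num_meets|exact: fin_num_meets|].
apply: le_measure; rewrite ?inE; [exact: measurable_meets|exact: measurable_meets|].
by move=> w [x [Mx Bx]]; exists x; split => //; exact: MM'.
Qed.

Lemma exists_core_candidate_sup : exists Ms, core_candidate Ms /\
  forall n m, sup_ball_mass n m <= ball_mass Ms n m.
Proof.
have near_sup (nmj : nat * nat * nat) : exists M, core_candidate M /\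
    sup_ball_mass nmj.1.1 nmj.1.2 - radius nmj.2 < ball_mass M nmj.1.1 nmj.1.2.
  have [_ [M hM <-] h] := sup_adherent (radius_gt0 nmj.2) (has_sup_ball_mass nmj.1.1 nmj.1.2).
  by exists M.
have [Mnear hMnear] := choice near_sup.
pose Mseq k := if @unpickle (nat * nat * nat)%type k is Some nmj then Mnear nmj
  else fun=> set0.
have hMseq k : core_candidate (Mseq k).
  by rewrite /Mseq; case: unpickle => [nmj|]; [exact: (hMnear nmj).1|exact: core_candidate0].
pose Ms w := closure (\bigcup_k Mseq k w).
have hMs : core_candidate Ms := core_candidate_closure_bigcup hMseq.
exists Ms; split => // n m; rewrite leNgt; apply/negP => lt.
have [j hj] := @exists_radius_lt (sup_ball_mass n m - ball_mass Ms n m) ltac:(by rewrite subr_gt0).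
have : ball_mass (Mnear (n, m, j)) n m <= ball_mass Ms n m.
  apply: ball_mass_le hMs _ => [|w x Mx]; first exact: (hMnear _).1.
  by apply: subset_closure; exists (pickle (n, m, j)) => //; rewrite /Mseq pickleK.
by have := (hMnear (n, m, j)).2; rewrite /=; lra.
Qed.

Lemma core_candidate_sup_max Ms M : core_candidate Ms ->
  (forall n m, sup_ball_mass n m <= ball_mass Ms n m) ->
  core_candidate M -> {ae P, forall w, M w `<=` Ms w}.
Proof.
move=> hMs Ms_max hM; pose Mu w := closure (Ms w `|` M w).
have hMu : core_candidate Mu := core_candidate_closureU hMs hM.
apply: ae_sub_of_rat_ball_escape => [w|n m]; first by case: hMs.
pose E M' := [set w | meets_rat_ball (M' w) n m].
have EMu M' : (forall w, M' w `<=` Mu w) -> E M' `<=` E Mu.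
  by move=> M'Mu w [x [Mx Bx]]; exists x; split => //; exact: M'Mu.
have massMu : (P (E Mu) <= P (E Ms))%E.
  have : ball_mass Mu n m <= ball_mass Ms n m.
    apply: le_trans (Ms_max n m); rewrite /sup_ball_mass.
    by apply: (sup_upper_bound (has_sup_ball_mass n m)); exists Mu.
  by rewrite /ball_mass -lee_fin !fineK ?fin_num_meets.
have mD : measurable (E Mu `\` E Ms).
  exact: measurableD (measurable_meets n m hMu) (measurable_meets n m hMs).
apply: (negligibleS (A := E Mu `\` E Ms)) => [w [hMw nMs]|].
  split; first by apply: EMu hMw => v x Mx; apply: subset_closure; right.
  by move=> Msw; apply: nMs; exact: meets_rat_ball3W.
apply/(negligibleP _ mD); apply: measure_setD_eq0 massMu.
- exact: measurable_meets.
- exact: measurable_meets.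
- by apply: EMu => w x Mx; apply: subset_closure; left.
Qed.

Lemma conditional_core_exists : exists M, is_ccore P G X M.
Proof.
have [Ms [hMs Ms_max]] := exists_core_candidate_sup.
exists Ms; case: (hMs) => hm hc hsub; split => // M hm' hc' hsub'.
exact: core_candidate_sup_max.
Qed.

End ConditionalCore.

Section OneStep.
Variables (P : probability Omega R) (G : set (set Omega)).
Hypotheses (sigmaG : sigma_algebra setT G) (GP : G `<=` measurable).
Implicit Types (K M : Omega -> set vec).

Lemma solvency_ae0 K : solvency P G K -> {ae P, forall w, K w 0}.
Proof.
case=> _ _ _ _; apply: filterS => w h.
by have : [set 0] (0 : vec) by []; rewrite -h => -[].
Qed.

Lemma L0_solvency0 K : solvency P G K -> L0 P K G (fun _ => 0).
Proof. by move=> hK; split; [exact: rv_meas_cst|exact: solvency_ae0]. Qed.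

Lemma L0_negset0 K : solvency P G K -> L0 P (fun w => negset (K w)) G (fun _ => 0).
Proof.
move=> hK; split; first exact: rv_meas_cst.
by move: (solvency_ae0 hK); apply: filterS => w; rewrite /negset /= oppr0.
Qed.

Lemma ae_solvency_add K : solvency P G K -> {ae P, forall w, is_cone (K w)} ->
  {ae P, forall w, forall x y, K w x -> K w y -> K w (x + y)}.
Proof.
case=> _ _ convK _ _; apply: filterS => w coneK x y.
exact: cone_convex_addr.
Qed.

Lemma L0_solvency_add K X Y : solvency P G K -> {ae P, forall w, is_cone (K w)} ->
  L0 P K G X -> L0 P K G Y -> L0 P K G (fun w => X w + Y w).
Proof.
move=> hK coneK [mX aX] [mY aY]; split; first exact: rv_meas_add.
by move: (ae_solvency_add hK coneK) aX aY; apply: filterS3 => w h; exact: h.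
Qed.

Lemma L0_closed_cvg_in_prob K (Xs : nat -> Omega -> vec) Y :
  rset_meas G K -> (forall w, closed (K w)) ->
  (forall k, L0 P K G (Xs k)) -> L0R P G Y -> cvg_in_prob P Xs Y -> L0 P K G Y.
Proof.
move=> mK cK hXs [mY _] XsY; split => //.
suff : {ae P, forall w, [set Y w] `<=` K w} by apply: filterS => w /(_ (Y w) erefl).
apply: ae_sub_of_rat_ball_escape => // n m.
pose E := rat_ball_escape (fun w => [set Y w]) K n m.
have mE : measurable E := GP (sa_rat_ball_escape sigmaG n m (rset_meas_set1 sigmaG mY) mK).
pose far k := [set w | radius m < `|Xs k w - Y w|].
have mfar k : measurable (far k).
  apply: GP; rewrite (_ : far k = ~` [set w | `|Xs k w - Y w| <= radius m]).
    apply: (sa_setC sigmaG); apply: (sa_norm_le sigmaG _ (ltW (radius_gt0 m))).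
    by apply: (rv_meas_add sigmaG); [exact: (proj1 (hXs k))|exact: (rv_meas_opp sigmaG)].
  by apply/seteqP; split => w; rewrite /far /= ltNge => /negP.
apply/(negligibleP _ mE); apply: (measure_le_cvg0 (u := fun k => P (far k))); last first.
  exact: XsY (radius_gt0 m).
move=> k; apply: le_measure_ae mE (mfar k) _.
move: (proj2 (hXs k)); apply: filterS => w KX [[_ [-> BY]] nK].
by apply: ball_far BY _ => BX; apply: nK; exists (Xs k w).
Qed.

(* Apply the inclusion to the indicator of the escape event times the upper
   corner of the rational ball: on that event the corner dominates a point
   of M, hence lies in K, so it lies in K' inside the triple ball. *)
Lemma ae_sub_of_L0_sub K (K' : Omega -> set vec) M :
  rset_meas G K' -> (forall w, closed (K' w)) ->
  {ae P, forall w, K w 0} ->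
  {ae P, forall w, forall x y, K w x -> Rdplus y -> K w (x + y)} ->
  L0 P K G `<=` L0 P K' G ->
  rset_meas G M -> {ae P, forall w, M w `<=` K w} ->
  {ae P, forall w, M w `<=` K' w}.
Proof.
move=> mK' cK' K0 Kup KK' mM MK.
apply: ae_sub_of_rat_ball_escape => // n m.
pose E := rat_ball_escape M K' n m.
have GE : G E := sa_rat_ball_escape sigmaG n m mM mK'.
pose c := rat_vec n + const_mx (radius m).
pose eta w := if `[< E w >] then c else 0.
have [_] : L0 P K' G eta.
  apply: KK'; split.
    exact: (@rv_meas_if _ sigmaG E (fun=> c) (fun=> 0) GE (rv_meas_cst _ c) (rv_meas_cst _ 0)).
  move: MK Kup K0; apply: filterS3 => w MKw Kupw K0w.
  rewrite /eta; case: asboolP => // -[[y [My By]] _].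
  by rewrite -(subrKC y c); apply: Kupw; [exact: MKw|exact: ball_corner_ge].
apply: negligibleS => w Ew /=; rewrite /eta; case: asboolP => // _ K'c.
by case: Ew => _; apply; exists c; split => //; exact/ball_corner/radius_gt0.
Qed.

Lemma L0_sub_of_core K (K' : Omega -> set vec) M :
  is_ccore P G K M -> {ae P, forall w, M w `<=` K' w} -> L0 P K G `<=` L0 P K' G.
Proof.
case=> _ _ _ Mmax MK' xi [mxi Kxi]; split => //.
have cl1 w : closed [set xi w].
  exact/accessible_closed_set1/hausdorff_accessible/norm_hausdorff.
have : {ae P, forall w, [set xi w] `<=` M w}.
  by apply: Mmax (rset_meas_set1 sigmaG mxi) cl1 _; move: Kxi; apply: filterS => w Kw y ->.
by move: MK'; apply: filterS2 => w MK'w xiM; apply/MK'w/xiM.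
Qed.

End OneStep.

Section NoArbitrageSecondKind.
Variables (P : probability Omega R) (F : nat -> set (set Omega))
  (K : nat -> Omega -> set vec) (T : nat).
Hypotheses (filtrationF : is_filtration P F)
  (solvencyK : forall t, (t <= T)%N -> solvency P (F t) (K t))
  (coneK : forall t, (t <= T)%N -> {ae P, forall w, is_cone (K t w)}).

Let sigmaF t : sigma_algebra setT (F t). Proof. by case: filtrationF. Qed.
Let FP t : F t `<=` measurable. Proof. by case: filtrationF => _ h _ _ _; exact: h. Qed.
Let F_mono s t : (s <= t)%N -> F s `<=` F t.
Proof. by case: filtrationF => _ _ h _ _ st A; exact: h. Qed.

Let L0_add t X Y : (t <= T)%N -> L0 P (K t) (F t) X -> L0 P (K t) (F t) Y ->
  L0 P (K t) (F t) (fun w => X w + Y w).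
Proof. by move=> tT; exact: (L0_solvency_add (sigmaF t) (solvencyK tT) (coneK tT)). Qed.

Let K_add t : (t <= T)%N ->
  {ae P, forall w, forall x y, K t w x -> K t w y -> K t w (x + y)}.
Proof. by move=> tT; exact: ae_solvency_add (solvencyK tT) (coneK tT). Qed.

Let L0_0 t : (t <= T)%N -> L0 P (K t) (F t) (fun _ => 0).
Proof. by move=> tT; exact (L0_solvency0 (sigmaF t) (solvencyK tT)). Qed.

Let L0_negset_0 t : (t <= T)%N -> L0 P (fun w => negset (K t w)) (F t) (fun _ => 0).
Proof. by move=> tT; exact (L0_negset0 (sigmaF t) (solvencyK tT)). Qed.

Definition NA2_step t := L0 P (K t) (F t.-1) `<=` L0 P (K t.-1) (F t.-1).

Lemma rv_meas_Aset_aux t k xi : Aset_aux P F K t k xi -> rv_meas (F (t + k)) xi.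
Proof.
elim: k xi => [|k IH] xi /=; first by rewrite addn0 => -[].
move=> [Y [Z [hY [[hZ _] ->]]]]; apply: (rv_meas_add (sigmaF _)) hZ.
by apply: rv_measS (IH _ hY); apply: F_mono; rewrite addnS.
Qed.

Lemma Aset_aux_term t k j Z : (j <= k)%N -> (t + k <= T)%N ->
  L0 P (fun w => negset (K (t + j)%N w)) (F (t + j)%N) Z -> Aset_aux P F K t k Z.
Proof.
elim: k j Z => [|k IH] j Z /=; first by rewrite leqn0 => /eqP -> _; rewrite addn0.
rewrite leq_eqVlt => /orP[/eqP ->|jk] tkT hZ.
  exists (fun _ => 0), Z; split; last by split => //; apply/funext => w; rewrite add0r.
  by apply: (IH 0%N) => //; [lia|rewrite addn0; apply: L0_negset_0; lia].
exists Z, (fun _ => 0); split; first by apply: (IH j) => //; lia.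
split; last by apply/funext => w; rewrite addr0.
by apply: L0_negset_0; lia.
Qed.

Lemma NA2_step_of_NA2 : NA2 P F K T -> forall t, (1 <= t <= T)%N -> NA2_step t.
Proof.
move=> NA t /andP[t1 tT] xi [mxi Kxi]; have st : t = t.-1.+1 by rewrite prednK.
apply: NA; [lia|by split; last exact: aeW|].
exists (fun w => - xi w); split.
  apply: (@Aset_aux_term t.-1 (T - t.-1) 1); [lia|lia|rewrite addn1 -st; split].
    by apply: (rv_meas_opp (sigmaF _)); apply: rv_measS mxi; apply: F_mono; lia.
  by move: Kxi; apply: filterS => w; rewrite /negset /= opprK.
rewrite (_ : (fun w => _) = fun _ => 0); first exact: L0_0.
by apply/funext => w; rewrite subrr.
Qed.

(* Peel off the last summand of [A_{t,t+k}] with one application of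
   [NA2_step (t + k)], then induct on [k]. *)
Lemma NA2_of_steps_aux : (forall t, (1 <= t <= T)%N -> NA2_step t) ->
  forall k t eta xi, (t + k <= T)%N -> L0R P (F t) eta -> Aset_aux P F K t k xi ->
  L0 P (K (t + k)) (F (t + k)) (fun w => eta w + xi w) -> L0 P (K t) (F t) eta.
Proof.
move=> steps; elim => [|k IH] t eta xi tkT heta /=.
  rewrite !addn0 in tkT * => -[_ Kxi] [_ Ksum]; split; first exact: (proj1 heta).
  move: (K_add tkT) Kxi Ksum.
  by apply: filterS3 => w Kadd Kxi Ksum; have := Kadd _ _ Ksum Kxi; rewrite addrK.
move=> [Y [Z [hY [[mZ KZ] ->]]]] [_ Ksum].
apply: (IH t eta Y) => //; first lia.
have := steps (t + k.+1)%N ltac:(lia) (fun w => eta w + Y w); rewrite addnS /=; apply.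
split.
  apply: (rv_meas_add (sigmaF _)) (rv_meas_Aset_aux hY).
  by apply: rv_measS (proj1 heta); apply: F_mono; lia.
rewrite -addnS; move: (K_add tkT) KZ Ksum.
by apply: filterS3 => w Kadd KZ Ksum; have := Kadd _ _ Ksum KZ; rewrite addrA addrK.
Qed.

Lemma NA2_of_steps : (forall t, (1 <= t <= T)%N -> NA2_step t) -> NA2 P F K T.
Proof.
move=> steps t tT eta heta [xi [hxi Ksum]].
by apply: (@NA2_of_steps_aux steps (T - t) t eta xi) => //; rewrite subnKC.
Qed.

Lemma Xi_aux_of_steps : (forall t, (1 <= t <= T)%N -> NA2_step t) ->
  forall k, (k <= T)%N -> Xi_aux P F K T k = L0 P (K (T - k)) (F (T - k)).
Proof.
move=> steps; elim => [|k IH] kT /=; first by rewrite subn0.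
rewrite IH; last lia.
have Tk : (T - k = (T - k.+1).+1)%N by lia.
apply/seteqP; split => X.
  move=> [Y [Z [hY [[hZ [mZ _]] ->]]]]; apply: L0_add hY _; first lia.
  have := steps (T - k)%N ltac:(lia) Z; rewrite Tk /=; apply; split => //.
  by case: hZ; rewrite Tk.
move=> hX; exists X, (fun _ => 0); split => //.
split; last by apply/funext => w; rewrite addr0.
split; first by apply: L0_0; lia.
by split; [exact: (rv_meas_cst (sigmaF _))|exact: aeW].
Qed.

Lemma Xi0_of_steps : (forall t, (1 <= t <= T)%N -> NA2_step t) ->
  forall t, (t <= T)%N -> Xi0 P F K T t = L0 P (K t) (F t).
Proof. by move=> steps t tT; rewrite /Xi0 Xi_aux_of_steps ?leq_subr // subKn. Qed.

Lemma steps_of_Xi0 : (forall t, (t <= T)%N -> Xi0 P F K T t = L0 P (K t) (F t)) ->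
  forall t, (1 <= t <= T)%N -> NA2_step t.
Proof.
move=> XiE t /andP[t1 tT] xi [mxi Kxi].
have := XiE t.-1 ltac:(lia); rewrite /Xi0 (_ : T - t.-1 = (T - t).+1)%N /=; last lia.
rewrite (_ : T - (T - t).+1 = t.-1)%N; last lia.
move=> <-; exists (fun _ => 0), xi; split.
  by apply: L0_0; lia.
split; last by apply/funext => w; rewrite add0r.
split; last by split => //; exact: aeW.
rewrite -/(Xi0 P F K T t) XiE //; split => //.
by apply: rv_measS mxi; apply: F_mono; lia.
Qed.

Lemma hatXi0_sub_L0 : (forall t, (1 <= t <= T)%N -> NA2_step t) ->
  forall t, (t <= T)%N -> hatXi0 P F K T t `<=` L0 P (K t) (F t).
Proof.
move=> steps t tT; rewrite /hatXi0; case: ifP => tT'; last first.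
  have -> : t = T by lia.
  by rewrite /Xi0 subnn.
move=> X [Y [Z [hY [[hZ [Xs [hXs XsZ]]] ->]]]]; apply: L0_add hY _ => //.
case: (solvencyK tT) => mK cK _ _ _.
refine (L0_closed_cvg_in_prob (sigmaF t) (@FP t) mK cK _ hZ XsZ) => k.
have [+ [mXs _]] := hXs k; rewrite Xi0_of_steps // => -[_ KXs].
by have := steps t.+1 ltac:(lia) (Xs k); apply.
Qed.

Lemma SNR_of_steps :
  (forall t, (t <= T)%N -> {ae P, forall w, K t w `&` negset (K t w) = [set 0]}) ->
  (forall t, (1 <= t <= T)%N -> NA2_step t) ->
  forall t, (t <= T)%N ->
  hatXi0 P F K T t `&` L0 P (fun w => negset (K t w)) (F t) `<=` L0 P (K0 (K t)) (F t).
Proof.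
move=> proper steps t tT X [/(hatXi0_sub_L0 steps tT) [mX KX] [_ negKX]]; split => //.
have X0 : {ae P, forall w, X w = 0}.
  move: (proper t tT) KX negKX; apply: filterS3 => w Kproper KXw negKXw.
  by have : (K t w `&` negset (K t w)) (X w) by []; rewrite Kproper.
move: X0 (solvency_ae0 (solvencyK tT)); apply: filterS2 => w -> K0w c _.
by rewrite scaler0.
Qed.

Lemma NA2_step_of_core t :
  (exists M, is_ccore P (F t.-1) (K t) M /\ {ae P, forall w, M w `<=` K t.-1 w}) ->
  NA2_step t.
Proof. by case=> M [coreM MK]; exact (L0_sub_of_core (sigmaF _) coreM MK). Qed.

Lemma core_of_NA2_step t : (1 <= t <= T)%N -> NA2_step t ->
  exists M, is_ccore P (F t.-1) (K t) M /\ {ae P, forall w, M w `<=` K t.-1 w}.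
Proof.
move=> /andP[t1 tT] step; have t1T : (t.-1 <= T)%N by lia.
case: (solvencyK tT) => _ cK _ Kup _; case: (solvencyK t1T) => mK' cK' _ _ _.
have [M coreM] := conditional_core_exists P (sigmaF t.-1) (@FP t.-1) cK.
exists M; split => //; case: (coreM) => mM _ MK _.
exact (ae_sub_of_L0_sub (sigmaF _) mK' cK' (solvency_ae0 (solvencyK tT)) Kup step mM MK).
Qed.

End NoArbitrageSecondKind.

End RandomVectors.

Unset Implicit Arguments.
Theorem lemma7p2 (dm : measure_display) (Omega : measurableType dm)
  (R : realType) (d : nat) (P : probability Omega R)
  (F : nat -> set (set Omega)) (K : nat -> Omega -> set 'rV[R]_d) (T : nat) :
  is_filtration P F ->
  (forall t, (t <= T)%N -> solvency P (F t) (K t)) ->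
  (forall t, (t <= T)%N -> {ae P, forall w, is_cone (K t w)}) ->
  (* (i) *)
  (NA2 P F K T <-> (forall t, (t <= T)%N -> Xi0 P F K T t = L0 P (K t) (F t))) /\
  (* (ii) *)
  (NA2 P F K T <->
     (forall t, (1 <= t <= T)%N ->
        exists M, is_ccore P (F t.-1) (K t) M /\
                  {ae P, forall w, M w `<=` K t.-1 w})) /\
  (* (iii) *)
  ((forall t, (t <= T)%N -> {ae P, forall w, K t w `&` negset (K t w) = [set 0]}) ->
   NA2 P F K T ->
   forall t, (t <= T)%N ->
     hatXi0 P F K T t `&` L0 P (fun w => negset (K t w)) (F t) `<=` L0 P (K0 (K t)) (F t)).
Proof.
move=> filtrationF solvencyK coneK.
have NA2E : NA2 P F K T <-> forall t, (1 <= t <= T)%N -> NA2_step P F K t.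
  split; first exact: NA2_step_of_NA2 filtrationF solvencyK.
  exact: NA2_of_steps filtrationF solvencyK coneK.
split; [|split].
- split => [/NA2E steps|XiE]; first exact: Xi0_of_steps filtrationF solvencyK coneK steps.
  by apply/NA2E; exact: steps_of_Xi0 filtrationF solvencyK XiE.
- split => [/NA2E steps t tT|cores].
    exact: (core_of_NA2_step filtrationF solvencyK tT (steps t tT)).
  by apply/NA2E => t tT; exact (NA2_step_of_core filtrationF (cores t tT)).
- by move=> proper /NA2E steps; exact: SNR_of_steps filtrationF solvencyK coneK proper steps.
Qed.
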